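(* Consider the network $\Sigma$ (with all the structural assumptions in the context), let $M\in\mathbb{N}$, and let $\mathcal{A}_i\subset\mathbb{R}^{n_i}$, $i\in\mathbb{N}$, be nonempty closed sets such that $(\mathcal{A}_i)_{i\in\mathbb{N}}$ is uniformly bounded (there is $C>0$ with $|z|\le C$ for all $i$ and all $z\in\mathcal{A}_i$). Suppose that for each $i\in\mathbb{N}$ there exist a continuous $W_i:\mathbb{R}^{n_i}\to[0,\infty)$, functions $\underline\omega_i,\overline\omega_i\in\mathcal{K}_\infty$, $\gamma_{ij}\in\mathcal{K}_\infty\cup\{0\}$ ($j\in\mathbb{N}$) and $\gamma_{iu}\in\mathcal{K}$ such that (1) $\underline\omega_i(|\xi_i|_{\mathcal{A}_i})\le W_i(\xi_i)\le\overline\omega_i(|\xi_i|_{\mathcal{A}_i})$ for all $\xi_i\in\mathbb{R}^{n_i}$; (2) $W_i(x_i(M,\xi,u))\le\max\{\sup_{j\in\mathbb{N}}\gamma_{ij}(W_j(\xi_j)),\gamma_{iu}(\|u\|_\infty)\}$ for all $\xi\in X$, $u\in\mathcal{U}$; and that these satisfy the uniformity conditions: there exist $\underline\omega,\overline\omega\in\mathcal{K}_\infty$ with $\underline\omega\le\underline\omega_i\le\overline\omega_i\le\overline\omega$ for all $i$; there exists $\alpha\in\mathcal{K}_\infty$ with $\alpha(s)<s$ for all $s>0$ and $\gamma_{ij}\le\alpha$ for all $i,j$; and there is $\bar\gamma_u\in\mathcal{K}$ with $\gamma_{iu}\le\bar\gamma_u$ for all $i$. Then $\Sigma^M$ is well-posed,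 i.e. $f^M(x,(u_0,\dots,u_{M-1}))\in X$ for all $x\in X$ and $u_0,\dots,u_{M-1}\in U$.
   Context: For each $i\in\mathbb{N}$ fix positive integers $n_i,p_i$, norms $|\cdot|$ on $\mathbb{R}^{n_i},\mathbb{R}^{p_i}$, and a finite set $I_i\subset\mathbb{N}\setminus\{i\}$ such that each set $\{j\in\mathbb{N}: i\in I_j\}$ is finite; $X(I_i)=\prod_{j\in I_i}\mathbb{R}^{n_j}$ with norm $\sup_{j\in I_i}|x_j|$; $f_i:\mathbb{R}^{n_i}\times X(I_i)\times\mathbb{R}^{p_i}\to\mathbb{R}^{n_i}$ continuous. $X_E=\prod_i\mathbb{R}^{n_i}$; $X$ (resp. $U$) the subspace of sequences $(x_i)$ with $x_i\in\mathbb{R}^{n_i}$ (resp. $(u_i)$, $u_i\in\mathbb{R}^{p_i}$) with finite norm $\sup_i|x_i|=:|x|_\infty$. $f:X_E\times U\to X_E$, $f(x,u)_i=f_i(x_i,(x_j)_{j\in I_i},u_i)$; network $\Sigma$: $x(k+1)=f(x(k),u(k))$. $\mathcal{U}$: sequences $u:\mathbb{N}_0\to U$ with $\|u\|_\infty=\sup_k|u(k)|_\infty<\infty$; for $\xi\in X_E$, $x(k,\xi,u)\in X_E$ denotes the solution with $x(0)=\xi$ and $x_i(k,\xi,u)$ its $i$-th component. Iterates: $f^1=f$, $f^{k+1}(x,(u_0,\dots,u_k))=f(f^k(x,(u_0,\dots,u_{k-1})),u_k)$. $|z|_{\mathcal{A}_i}=\inf_{y\in\mathcal{A}_i}|z-y|$.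 $\mathcal{K}$, $\mathcal{K}_\infty$ are the standard comparison classes; inequalities between functions are pointwise. *)

From HB Require Import structures.
From mathcomp Require Import all_boot all_order all_algebra.
From mathcomp Require Import all_classical all_reals.
Set Implicit Arguments. Unset Strict Implicit. Unset Printing Implicit Defensive.
Import Order.TTheory GRing.Theory Num.Theory.
Local Open Scope classical_set_scope.
Local Open Scope ring_scope.

Section Defs.
Variable R : realType.

Definition is_norm (m : nat) (nr : 'rV[R]_m -> R) : Prop :=
  [/\ (forall x, nr x = 0 -> x = 0),
      (forall (a : R) x, nr (a *: x) = `|a| * nr x) &
      (forall x y, nr (x + y) <= nr x + nr y)].

Definition classK (g : R -> R) : Prop :=
  [/\ g 0 = 0,
      (forall s t, 0 <= s -> s < t -> g s < g t) &
      (forall s, 0 <= s -> forall e, 0 < e ->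
         exists2 d, 0 < d & forall t, 0 <= t -> `|t - s| < d -> `|g t - g s| < e)].

Definition classKinf (g : R -> R) : Prop :=
  classK g /\ (forall c, exists2 s, 0 <= s & c < g s).

Definition closed_wrt (m : nat) (nr : 'rV[R]_m -> R) (A : set 'rV[R]_m) : Prop :=
  forall z, (forall e, 0 < e -> exists2 y, A y & nr (z - y) < e) -> A z.

Definition dist_to (m : nat) (nr : 'rV[R]_m -> R) (A : set 'rV[R]_m) (z : 'rV[R]_m) : R :=
  inf [set nr (z - y) | y in A].

Definition continuous_wrt (m : nat) (nr : 'rV[R]_m -> R) (W : 'rV[R]_m -> R) : Prop :=
  forall z e, 0 < e -> exists2 d, 0 < d & forall z', nr (z' - z) < d -> `|W z' - W z| < e.

Definition Xloc (n : nat -> nat) (I : nat -> seq nat) (i : nat) : Type :=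
  forall j : seq_sub (I i), 'rV[R]_(n (val j)).

Definition cont_fi (n p : nat -> nat) (I : nat -> seq nat)
  (nx : forall i, 'rV[R]_(n i) -> R) (nu : forall i, 'rV[R]_(p i) -> R)
  (fi : forall i, 'rV[R]_(n i) -> Xloc n I i -> 'rV[R]_(p i) -> 'rV[R]_(n i)) (i : nat) : Prop :=
  forall x w v e, 0 < e -> exists2 d, 0 < d & forall x' w' v',
    nx i (x' - x) < d -> (forall j, nx (val j) (w' j - w j) < d) -> nu i (v' - v) < d ->
    nx i (fi i x' w' v' - fi i x w v) < e.

Definition netf (n p : nat -> nat) (I : nat -> seq nat)
  (fi : forall i, 'rV[R]_(n i) -> Xloc n I i -> 'rV[R]_(p i) -> 'rV[R]_(n i))
  (x : forall i, 'rV[R]_(n i)) (u : forall i, 'rV[R]_(p i)) : forall i, 'rV[R]_(n i) :=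
  fun i => fi i (x i) (fun j => x (val j)) (u i).

(* f^k(x, (u_0,...,u_{k-1})); also the solution x(k, x, u) *)
Fixpoint fiter (n p : nat -> nat) (I : nat -> seq nat)
  (fi : forall i, 'rV[R]_(n i) -> Xloc n I i -> 'rV[R]_(p i) -> 'rV[R]_(n i))
  (k : nat) (x : forall i, 'rV[R]_(n i)) (us : nat -> forall i, 'rV[R]_(p i)) :
  forall i, 'rV[R]_(n i) :=
  match k with
  | 0 => x
  | k'.+1 => netf fi (fiter fi k' x us) (us k')
  end.

Definition in_linf (m : nat -> nat) (nr : forall i, 'rV[R]_(m i) -> R)
  (x : forall i, 'rV[R]_(m i)) : Prop :=
  exists C, forall i, nr i (x i) <= C.

Definition linf_norm (m : nat -> nat) (nr : forall i, 'rV[R]_(m i) -> R)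
  (x : forall i, 'rV[R]_(m i)) : R :=
  sup (range (fun i => nr i (x i))).

Definition in_calU (m : nat -> nat) (nr : forall i, 'rV[R]_(m i) -> R)
  (u : nat -> forall i, 'rV[R]_(m i)) : Prop :=
  exists C, forall k i, nr i (u k i) <= C.

Definition calU_norm (m : nat -> nat) (nr : forall i, 'rV[R]_(m i) -> R)
  (u : nat -> forall i, 'rV[R]_(m i)) : R :=
  sup (range (fun k => linf_norm nr (u k))).

End Defs.

From HB Require Import structures.
From mathcomp Require Import all_boot all_order all_algebra.
From mathcomp Require Import all_classical all_reals.
Import Order.TTheory GRing.Theory Num.Theory.
Local Open Scope classical_set_scope.
Local Open Scope ring_scope.

(* Since the sets A_i are nonempty and uniformly bounded, a state x lies in X
   iff the distances |x_i|_{A_i} are bounded uniformly in i, say by B.  Then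
   W_j(x_j) <= \overline\omega(B) =: K for all j, and (2) yields
   W_i(x_i(M,x,u)) <= c := max(\alpha(K), \bar\gamma_u(||u||)) for all i, where u
   extends the M given inputs by zero.  As \underline\omega is unbounded, the bound
   \underline\omega(|x_i(M,x,u)|_{A_i}) <= c makes these distances uniformly bounded
   again. *)

Section Norm.
Context {R : realType} {m : nat} {nr : 'rV[R]_m -> R}.
Hypothesis hnr : is_norm nr.

Lemma is_norm0 : nr 0 = 0.
Proof. by case: hnr => _ hZ _; rewrite -(scale0r (0 : 'rV[R]_m)) hZ normr0 mul0r. Qed.

Lemma is_normN x : nr (- x) = nr x.
Proof. by case: hnr => _ hZ _; rewrite -scaleN1r hZ normrN normr1 mul1r. Qed.

Lemma is_norm_ge0 x : 0 <= nr x.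
Proof.
case: (hnr) => _ _ hD.
have := hD x (- x); rewrite subrr is_norm0 is_normN -mulr2n.
by rewrite pmulrn_lge0.
Qed.

Lemma is_norm_le_subD x y : nr x <= nr (x - y) + nr y.
Proof. by case: hnr => _ _ hD; rewrite -{1}(subrK y x) hD. Qed.

Lemma is_norm_lerB x y : nr (x - y) <= nr x + nr y.
Proof. by case: hnr => _ _ hD; rewrite -(is_normN y) hD. Qed.

Context {A : set 'rV[R]_m}.
Hypothesis hA0 : A !=set0.

Lemma dist_to_ge0 z : 0 <= dist_to nr A z.
Proof.
have [a Aa] := hA0; apply: lb_le_inf; first by exists (nr (z - a)), a.
by move=> _ [y _ <-]; apply: is_norm_ge0.
Qed.

Lemma dist_to_le z y : A y -> dist_to nr A z <= nr (z - y).
Proof.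
move=> Ay; apply: ge_inf; last by exists y.
by exists 0 => _ [y' _ <-]; apply: is_norm_ge0.
Qed.

Context {C : R}.
Hypothesis hAC : forall y, A y -> nr y <= C.

Lemma dist_to_le_normD z : dist_to nr A z <= nr z + C.
Proof.
have [a Aa] := hA0; apply: le_trans (dist_to_le z a Aa) _.
by apply: le_trans (is_norm_lerB z a) _; rewrite lerD2l hAC.
Qed.

Lemma norm_le_dist_toD z : nr z <= dist_to nr A z + C.
Proof.
apply/ler_addgt0Pr => e e0.
have [a Aa] := hA0.
have de : dist_to nr A z < dist_to nr A z + e by rewrite ltrDl.
have [_ [y Ay <-] /ltW zy] := inf_lt (ex_intro _ _ (ex_intro2 _ _ a Aa erefl)) de.
apply: le_trans (is_norm_le_subD z y) _.
by rewrite addrAC lerD // hAC.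
Qed.

End Norm.

Section ComparisonFunctions.
Context {R : realType}.

Lemma classK_le {g : R -> R} {s t} : classK g -> 0 <= s -> s <= t -> g s <= g t.
Proof.
case=> _ hlt _ s0; rewrite le_eqVlt => /predU1P[-> //|st].
exact/ltW/hlt.
Qed.

Lemma classKinf_sublevel_bounded {g : R -> R} c : classKinf g ->
  exists s, forall t, 0 <= t -> g t <= c -> t <= s.
Proof.
case=> [[_ hlt _] hunb]; have [s s0 cs] := hunb c.
exists s => t t0 gtc; rewrite leNgt; apply/negP => st.
by have := lt_le_trans (hlt _ _ s0 st) gtc; rewrite ltNge (ltW cs).
Qed.

End ComparisonFunctions.

Section Linf.
Context {R : realType} {m : nat -> nat} {nr : forall i, 'rV[R]_(m i) -> R}.
Hypothesis hnr : forall i, is_norm (nr i).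

Lemma linf_norm_le (x : forall i, 'rV[R]_(m i)) C :
  (forall i, nr i (x i) <= C) -> linf_norm nr x <= C.
Proof.
move=> hC; apply: ge_sup; first by exists (nr 0%N (x 0%N)), 0%N.
by move=> _ [i _ <-].
Qed.

Lemma linf_norm_ge0 (x : forall i, 'rV[R]_(m i)) : in_linf nr x -> 0 <= linf_norm nr x.
Proof.
case=> C hC; apply: le_trans (is_norm_ge0 (hnr 0%N) (x 0%N)) _.
by apply: ub_le_sup; [exists C => _ [i _ <-] | exists 0%N].
Qed.

Lemma calU_norm_ge0 (u : nat -> forall i, 'rV[R]_(m i)) : in_calU nr u -> 0 <= calU_norm nr u.
Proof.
case=> C hC; apply: le_trans (linf_norm_ge0 (u 0%N) (ex_intro _ C (hC 0%N))) _.
apply: ub_le_sup; last by exists 0%N.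
by exists C => _ [k _ <-]; apply: linf_norm_le.
Qed.

Lemma in_linf_prefix_bound (us : nat -> forall i, 'rV[R]_(m i)) M :
  (forall k, (k < M)%N -> in_linf nr (us k)) ->
  exists2 C, 0 <= C & forall k, (k < M)%N -> forall i, nr i (us k i) <= C.
Proof.
elim: M => [|M IH] hus; first by exists 0.
have [C C0 hC] := IH (fun k kM => hus k (ltnW kM)).
have [D hD] := hus M (ltnSn M).
exists (Num.max C D); first by rewrite le_max C0.
move=> k; rewrite ltnS leq_eqVlt => /predU1P[-> | kM] i.
  by rewrite le_max hD orbT.
by rewrite le_max hC.
Qed.

Definition pad_zero M (us : nat -> forall i, 'rV[R]_(m i)) : nat -> forall i, 'rV[R]_(m i) :=
  fun k => if (k < M)%N then us k else fun i => 0.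

Lemma in_calU_pad_zero {M us} :
  (forall k, (k < M)%N -> in_linf nr (us k)) -> in_calU nr (pad_zero M us).
Proof.
move=> /in_linf_prefix_bound[C C0 hC]; exists C => k i; rewrite /pad_zero.
by case: ifP => kM; [apply: hC | rewrite is_norm0].
Qed.

Context {A : forall i, set 'rV[R]_(m i)} {C : R}.
Hypotheses (hA0 : forall i, A i !=set0) (hAC : forall i y, A i y -> nr i y <= C).

Lemma in_linf_dist_to (x : forall i, 'rV[R]_(m i)) :
  in_linf nr x <-> exists B, forall i, dist_to (nr i) (A i) (x i) <= B.
Proof.
split=> [[B hB] | [B hB]].
  exists (B + C) => i; apply: le_trans (dist_to_le_normD (hnr i) (hA0 i) (hAC i) _) _.
  by rewrite lerD2r.
exists (B + C) => i; apply: le_trans (norm_le_dist_toD (hnr i) (hA0 i) (hAC i) _) _.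
by rewrite lerD2r.
Qed.

End Linf.

Lemma fiter_ext {R : realType} {n p I fi} k x (us us' : nat -> forall i, 'rV[R]_(p i)) :
  (forall j, (j < k)%N -> us j = us' j) ->
  @fiter R n p I fi k x us = fiter fi k x us'.
Proof.
elim: k => [//|k IH] hus /=.
by rewrite IH ?hus // => j jk; apply/hus/ltnW.
Qed.

Theorem theorem1 (R : realType) (n p : nat -> nat)
  (nx : forall i, 'rV[R]_(n i) -> R) (nu : forall i, 'rV[R]_(p i) -> R)
  (I : nat -> seq nat)
  (fi : forall i, 'rV[R]_(n i) -> Xloc R n I i -> 'rV[R]_(p i) -> 'rV[R]_(n i))
  (hn : forall i, (0 < n i)%N) (hp : forall i, (0 < p i)%N)
  (hnx : forall i, is_norm (nx i)) (hnu : forall i, is_norm (nu i))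
  (hI : forall i, i \notin I i)
  (hIfin : forall i, exists N, forall j, i \in I j -> (j < N)%N)
  (hfc : forall i, cont_fi nx nu fi i)
  (M : nat) (hM : (0 < M)%N)
  (A : forall i, set 'rV[R]_(n i))
  (hA0 : forall i, A i !=set0)
  (hAc : forall i, closed_wrt (nx i) (A i))
  (hAb : exists2 C : R, 0 < C & forall i z, A i z -> nx i z <= C)
  (W : forall i, 'rV[R]_(n i) -> R)
  (wl wu : nat -> R -> R) (gam : nat -> nat -> R -> R) (gu : nat -> R -> R)
  (hW : forall i, (forall z, 0 <= W i z) /\ continuous_wrt (nx i) (W i))
  (hwl : forall i, classKinf (wl i)) (hwu : forall i, classKinf (wu i))
  (hgam : forall i j, classKinf (gam i j) \/ (forall s, 0 <= s -> gam i j s = 0))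
  (hgu : forall i, classK (gu i))
  (h1 : forall i z, wl i (dist_to (nx i) (A i) z) <= W i z
                    /\ W i z <= wu i (dist_to (nx i) (A i) z))
  (h2 : forall i (xi : forall j, 'rV[R]_(n j)) (u : nat -> forall j, 'rV[R]_(p j)),
          in_linf nx xi -> in_calU nu u ->
          forall c : R, (forall j, gam i j (W j (xi j)) <= c) ->
                        gu i (calU_norm nu u) <= c ->
                        W i (fiter fi M xi u i) <= c)
  (hunif1 : exists wl0 wu0, [/\ classKinf wl0, classKinf wu0 &
              forall i s, 0 <= s -> wl0 s <= wl i s /\ wl i s <= wu i s /\ wu i s <= wu0 s])
  (hunif2 : exists al, [/\ classKinf al, (forall s, 0 < s -> al s < s) &
              forall i j s, 0 <= s -> gam i j s <= al s])
  (hunif3 : exists gb, classK gb /\ forall i s, 0 <= s -> gu i s <= gb s) :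
  forall (x : forall i, 'rV[R]_(n i)) (us : nat -> forall i, 'rV[R]_(p i)),
    in_linf nx x -> (forall k, (k < M)%N -> in_linf nu (us k)) ->
    in_linf nx (fiter fi M x us).
Proof.
move=> x us hx hus.
have [C _ hAC] := hAb.
have [wl0 [wu0 [hwl0 [hwu0 _] hw]]] := hunif1.
have [al [[hal _] _ hgal]] := hunif2.
have [gb [_ hgbu]] := hunif3.
have dist0 i z := dist_to_ge0 (hnx i) (hA0 i) z.
pose u := pad_zero M us.
have hu : in_calU nu u := in_calU_pad_zero hnu hus.
have -> : fiter fi M x us = fiter fi M x u.
  by apply: fiter_ext => k kM; rewrite /u /pad_zero kM.
have [B hB] := (in_linf_dist_to hnx hA0 hAC x).1 hx.
have hWx j : W j (x j) <= wu0 B.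
  apply: le_trans (proj2 (h1 j _)) _.
  apply: le_trans (proj2 (proj2 (hw j _ (dist0 j _)))) _.
  exact: classK_le hwu0 (dist0 j _) (hB j).
pose c := Num.max (al (wu0 B)) (gb (calU_norm nu u)).
have hWc i : W i (fiter fi M x u i) <= c.
  apply: h2 => // [j|]; rewrite le_max; apply/orP; [left | right].
    exact: le_trans (hgal i j _ (proj1 (hW j) _)) (classK_le hal (proj1 (hW j) _) (hWx j)).
  exact: hgbu i _ (calU_norm_ge0 hnu _ hu).
have [s hs] := classKinf_sublevel_bounded c hwl0.
apply/(in_linf_dist_to hnx hA0 hAC); exists s => i; apply: hs (dist0 i _) _.
apply: le_trans (proj1 (hw i _ (dist0 i _))) _.
exact: le_trans (proj1 (h1 i _)) (hWc i).
Qed.
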